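(* Let $G=(X,\Sigma,\longrightarrow,X_0)$ and $R=(Z,\Sigma,\longrightarrow,Z_0)$ be automata. (1) For any $E\subseteq\wp(X\times Z)$, $E$ is a $\Sigma_{ucr}$-controllability set from $G$ to $R$ iff $F_{(G,R)}(E)=E$ and there exists $W_0\in E$ such that $\forall x_0\in X_0\,\exists z_0\in Z_0\,((x_0,z_0)\in W_0)$. (2) There exists a $\Sigma_{ucr}$-controllability set from $G$ to $R$ iff there exists $W_0\in E^{\uparrow}_{(G,R)}$ such that $\forall x_0\in X_0\,\exists z_0\in Z_0\,((x_0,z_0)\in W_0)$.
   Context: An automaton is a 4-tuple $A=(Q,\Sigma,\longrightarrow,Q_0)$ with state set $Q$, finite event set $\Sigma$, ${\longrightarrow}\subseteq Q\times\Sigma\times Q$ and $\emptyset\neq Q_0\subseteq Q$; write $q\xrightarrow{\sigma}q'$ for $(q,\sigma,q')\in{\longrightarrow}$. Events are partitioned into uncontrollable $\Sigma_{uc}$ and controllable $\Sigma_c$; $\Sigma_r\subseteq\Sigma$ is a fixed set of required events. For $W,W'\subseteq X\times Z$: $\mathit{match}_{G,R}(W,\sigma,W')$ iff for all $(x,z)\in W$ and $x\xrightarrow{\sigma}x'$ there is $z'$ with $z\xrightarrow{\sigma}z'$ and $(x',z')\in W'$. $E\subseteq\wp(X\times Z)$ is a $\Sigma_{ucr}$-controllability set from $G$ to $R$ if: (istate) some $W_0\in E$ satisfies $\forall x_0\in X_0\,\exists z_0\in Z_0\,((x_0,z_0)\in W_0)$; (a) for every $W\in E$, $\sigma\in\Sigma_{uc}$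 there is $W'\in E$ with $\mathit{match}_{G,R}(W,\sigma,W')$; (b) for every $W\in E$, $(x,z)\in W$, $\sigma\in\Sigma_r$, $z\xrightarrow{\sigma}z'$, there exist $x'$, $W'\in E$ with $x\xrightarrow{\sigma}x'$, $(x',z')\in W'$, $\mathit{match}_{G,R}(W,\sigma,W')$. $F_{(G,R)}:\wp(\wp(X\times Z))\to\wp(\wp(X\times Z))$ is defined by: $W\in F_{(G,R)}(E)$ iff $W\in E$ and (1) for every $\sigma\in\Sigma_{uc}$ there is $W'\in E$ with $\mathit{match}_{G,R}(W,\sigma,W')$, and (2) for every $(x,z)\in W$, $\sigma\in\Sigma_r$, $z'$ with $z\xrightarrow{\sigma}z'$ there exist $x'\in X$, $W'\in E$ with $x\xrightarrow{\sigma}x'$, $(x',z')\in W'$ and $\mathit{match}_{G,R}(W,\sigma,W')$. $F_{(G,R)}$ is monotone w.r.t. $\subseteq$, and $E^{\uparrow}_{(G,R)}$ denotes its greatest fixpoint. *)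

From mathcomp Require Import all_boot.
Set Implicit Arguments. Unset Strict Implicit. Unset Printing Implicit Defensive.

Record automaton (Q : Type) (Sigma : finType) := Automaton {
  trans : Q -> Sigma -> Q -> Prop;
  init : Q -> Prop;
  init_nonempty : exists q, init q
}.

Section Ctrl.
Variables (Sigma : finType) (X Z : Type).
(* Sigma_uc : uncontrollable events (controllable ones are the complement);
   Sigma_r : required events. *)
Variables (Sigma_uc Sigma_r : pred Sigma).
Variables (G : automaton X Sigma) (R : automaton Z Sigma).

(* W ⊆ X × Z is a predicate; E ⊆ ℘(X × Z) is a predicate on such predicates. *)
Definition match_GR (W : X * Z -> Prop) (s : Sigma) (W' : X * Z -> Prop) : Prop :=
  forall x z x', W (x, z) -> trans G x s x' ->
    exists z', trans R z s z' /\ W' (x', z').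

Definition istate_cond (E : (X * Z -> Prop) -> Prop) : Prop :=
  exists W0, E W0 /\ forall x0, init G x0 -> exists z0, init R z0 /\ W0 (x0, z0).

Definition controllability_set (E : (X * Z -> Prop) -> Prop) : Prop :=
  istate_cond E /\
  (forall W s, E W -> Sigma_uc s -> exists W', E W' /\ match_GR W s W') /\
  (forall W x z s z', E W -> W (x, z) -> Sigma_r s -> trans R z s z' ->
     exists x' W', trans G x s x' /\ E W' /\ W' (x', z') /\ match_GR W s W').

Definition F_GR (E : (X * Z -> Prop) -> Prop) : (X * Z -> Prop) -> Prop :=
  fun W => E W /\
    (forall s, Sigma_uc s -> exists W', E W' /\ match_GR W s W') /\
    (forall x z s z', W (x, z) -> Sigma_r s -> trans R z s z' ->
       exists x' W', trans G x s x' /\ E W' /\ W' (x', z') /\ match_GR W s W').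

Definition is_gfp_F (Eup : (X * Z -> Prop) -> Prop) : Prop :=
  F_GR Eup = Eup /\
  forall E, F_GR E = E -> forall W, E W -> Eup W.

End Ctrl.

From mathcomp Require Import all_boot.
From Stdlib Require Import FunctionalExtensionality PropExtensionality.

(* F_GR is deflationary and the transfer conditions (a), (b) say exactly that
   every member of E is a member of F_GR E; so E satisfies them iff E is a
   post-fixpoint of F_GR, iff (by deflation) a fixpoint.  Every fixpoint lies
   below the greatest one, which settles (2). *)

Section ControllabilitySets.
Variables (Sigma : finType) (X Z : Type) (Sigma_uc Sigma_r : pred Sigma).
Variables (G : automaton X Sigma) (R : automaton Z Sigma).

Local Notation F := (F_GR Sigma_uc Sigma_r G R).
Local Notation ctrl_set := (controllability_set Sigma_uc Sigma_r G R).

Lemma F_GR_sub (E : (X * Z -> Prop) -> Prop) W : F E W -> E W.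
Proof. by case. Qed.

Lemma F_GR_fixP (E : (X * Z -> Prop) -> Prop) :
  (forall W, E W -> F E W) <-> F E = E.
Proof.
split=> [postE | fixE W EW]; last by rewrite fixE.
apply: functional_extensionality => W.
by apply: propositional_extensionality; split; [exact: F_GR_sub | exact: postE].
Qed.

Lemma controllability_set_postP (E : (X * Z -> Prop) -> Prop) :
  ctrl_set E <-> istate_cond G R E /\ (forall W, E W -> F E W).
Proof.
split=> [[init_E [uc_E r_E]] | [init_E postE]].
  split=> // W EW; split=> //; split=> [s | x z s z' Wxz]; first exact: uc_E.
  exact: r_E.
split=> //; split=> [W s /postE [_ [uc_W _]] | W x z s z' /postE [_ [_ r_W]]].
  exact: uc_W.
exact: r_W.
Qed.

Lemma controllability_setP (E : (X * Z -> Prop) -> Prop) :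
  ctrl_set E <-> F E = E /\ istate_cond G R E.
Proof.
rewrite controllability_set_postP F_GR_fixP.
by split=> -[? ?].
Qed.

Lemma exists_controllability_setP (Eup : (X * Z -> Prop) -> Prop) :
  is_gfp_F Sigma_uc Sigma_r G R Eup ->
  (exists E, ctrl_set E) <-> istate_cond G R Eup.
Proof.
move=> [fixEup maxEup]; split=> [[E /controllability_setP [fixE [W0 [EW0 initW0]]]] | init_Eup].
  by exists W0; split=> //; exact: maxEup EW0.
by exists Eup; apply/controllability_setP.
Qed.

End ControllabilitySets.

Theorem proposition1 (Sigma : finType) (X Z : Type) (Sigma_uc Sigma_r : pred Sigma)
  (G : automaton X Sigma) (R : automaton Z Sigma) :
  (forall E : (X * Z -> Prop) -> Prop,
     controllability_set Sigma_uc Sigma_r G R E <->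
     (F_GR Sigma_uc Sigma_r G R E = E /\
      exists W0, E W0 /\ forall x0, init G x0 -> exists z0, init R z0 /\ W0 (x0, z0))) /\
  (forall Eup : (X * Z -> Prop) -> Prop,
     is_gfp_F Sigma_uc Sigma_r G R Eup ->
     ((exists E, controllability_set Sigma_uc Sigma_r G R E) <->
      exists W0, Eup W0 /\ forall x0, init G x0 -> exists z0, init R z0 /\ W0 (x0, z0))).
Proof.
split; [exact: controllability_setP | exact: exists_controllability_setP].
Qed.
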